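(* Let $\varepsilon>0$, and let $\gamma\in C([0,1])\cap C^1((0,1))$ satisfy $\gamma(0)=\gamma(1)=0$ and $\gamma(t)>0$ for $t\in(0,1)$. Let $c(t):=\dot\gamma(t)-\varepsilon/\gamma(t)$ for $t\in(0,1)$. Suppose: - the improper integral $\int_0^1 \frac{1}{\gamma(t)}\,\mathrm dt$ is finite, and - the product $\dot\gamma(t)\gamma(t)$ has a (unique) continuous extension to $[0,1]$. Then there exists a strictly increasing, bijective, continuously differentiable time change $\theta:[0,1]\to[0,1]$ such that the function $$\hat c(t):=c(\theta(t))\dot\theta(t)=\Big(\dot\gamma(\theta(t))-\frac{\varepsilon}{\gamma(\theta(t))}\Big)\dot\theta(t),$$ defined for $t\in(0,1)$, has a continuous extension to $[0,1]$. *)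

From Stdlib Require Import Reals.
From Coquelicot Require Import Coquelicot.
Open Scope R_scope.

Definition I01 (t : R) : Prop := 0 <= t <= 1.
Definition J01 (t : R) : Prop := 0 < t < 1.

Definition cont_on_I01 (f : R -> R) : Prop :=
  forall t, I01 t -> filterlim f (within I01 (locally t)) (locally (f t)).

Definition C1_open01 (f : R -> R) : Prop :=
  forall t, J01 t -> ex_derive f t /\ continuous (Derive f) t.

Definition is_derive_on_I01 (f df : R -> R) : Prop :=
  forall t, I01 t ->
    filterlim (fun s => (f s - f t) / (s - t))
      (within (fun s => I01 s /\ s <> t) (locally t)) (locally (df t)).

Definition C1_closed01 (f df : R -> R) : Prop :=
  is_derive_on_I01 f df /\ cont_on_I01 df.

Definition has_cont_ext_I01 (h : R -> R) : Prop :=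
  exists g : R -> R, cont_on_I01 g /\ forall t, J01 t -> g t = h t.

(* Let H be a primitive of 1/γ on (0,1). Since ∫ 1/γ converges, H extends continuously to
   [0,1], and it is strictly increasing. Put L = H(1) - H(0) and θ(t) = H^{-1}(H(0) + L t).
   Then θ is an increasing bijection of [0,1] with θ' = L γ∘θ, which is continuous on the
   closed interval because γ is, and
     ĉ = (γ'∘θ - ε/γ∘θ) L γ∘θ = L (γ'γ)∘θ - L ε
   extends continuously to [0,1] because γ'γ does. *)

From Stdlib Require Import Reals Lra ClassicalEpsilon.
From Coquelicot Require Import Coquelicot.
Open Scope R_scope.

Lemma locally_J01 (s : R) : J01 s -> locally s J01.
Proof. exact (open_and _ _ (open_gt 0) (open_lt 1) s). Qed.

Lemma cont_on_I01_comp (h th : R -> R) :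
  cont_on_I01 h -> cont_on_I01 th -> (forall t, I01 t -> I01 (th t)) ->
  cont_on_I01 (fun t => h (th t)).
Proof.
  intros Hh Hth Hmaps t Ht.
  apply (filterlim_comp _ _ _ th h _ (within I01 (locally (th t)))); [|exact (Hh _ (Hmaps t Ht))].
  intros P HP.
  generalize (Hth t Ht _ HP). unfold filtermap, within.
  apply filter_imp. intros u Hu Iu. exact (Hu Iu (Hmaps u Iu)).
Qed.

Lemma cont_on_I01_continuous_comp (phi h : R -> R) :
  (forall x, continuous phi x) -> cont_on_I01 h -> cont_on_I01 (fun t => phi (h t)).
Proof.
  intros Hphi Hh t Ht. exact (filterlim_comp _ _ _ h phi _ _ _ (Hh t Ht) (Hphi (h t))).
Qed.

Lemma MVT_open (H h : R -> R) (a b : R) : a < b ->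
  (forall c, a < c < b -> is_derive H c (h c)) -> (forall c, continuous H c) ->
  exists c, a < c < b /\ H b - H a = h c * (b - a).
Proof.
  intros Hab Hd Hc.
  assert (pr : forall c, a < c < b -> derivable_pt H c).
  { intros c Hc'. exists (h c). apply is_derive_Reals. auto. }
  destruct (MVT H id a b pr (fun c _ => derivable_pt_id c) Hab
     (fun c _ => proj2 (continuity_pt_filterlim H c) (Hc c))
     (fun c _ => derivable_continuous_pt _ _ (derivable_pt_id c))) as [c [Hc' Hm]].
  exists c. split; [exact Hc'|].
  rewrite derive_pt_id, (derive_pt_eq_0 H c (h c) (pr c Hc')) in Hm
    by (apply is_derive_Reals; auto).
  unfold id in Hm. lra.
Qed.

Lemma at_right_0_interval (d : R) : 0 < d -> at_right 0 (fun u => 0 < u < d).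
Proof.
  intros Hd. exists (mkposreal d Hd). intros y By Hy.
  change (Rabs (y - 0) < d) in By. split_Rabs; lra.
Qed.

Lemma at_left_1_interval (d : R) : 0 < d -> at_left 1 (fun u => 1 - d < u < 1).
Proof.
  intros Hd. exists (mkposreal d Hd). intros y By Hy.
  change (Rabs (y - 1) < d) in By. split_Rabs; lra.
Qed.

Definition strict_incr_I01 (H : R -> R) : Prop :=
  forall s t, 0 <= s -> s < t -> t <= 1 -> H s < H t.

Lemma strict_incr_of_pos_derive (H h : R -> R) :
  (forall s, continuous H s) -> (forall s, J01 s -> is_derive H s (h s)) ->
  (forall s, J01 s -> 0 < h s) -> strict_incr_I01 H.
Proof.
  intros Hc Hd Hpos s t Hs Hst Ht.
  destruct (MVT_open H h s t Hst) as [c [Hc' HH]]; [|exact Hc|].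
  - intros c Hc'. apply Hd. unfold J01. lra.
  - assert (0 < h c) by (apply Hpos; unfold J01; lra). nra.
Qed.

Section ImproperPrimitive.

Variables (f : R -> R) (l : R).
Hypothesis f_cont : forall t, J01 t -> continuous f t.
Hypothesis f_int : is_RInt_gen f (at_right 0) (at_left 1) l.

Lemma ex_RInt_J01 (a b : R) : J01 a -> J01 b -> ex_RInt f a b.
Proof.
  intros [Ha0 Ha1] [Hb0 Hb1]. apply (ex_RInt_continuous (V := R_CompleteNormedModule)).
  intros z [Hz0 Hz1]. apply f_cont. split.
  - apply Rlt_le_trans with (Rmin a b); [apply Rmin_glb_lt|]; lra.
  - apply Rle_lt_trans with (Rmax a b); [|apply Rmax_lub_lt]; lra.
Qed.

Lemma RInt_Chasles_J01 (a b c : R) : J01 a -> J01 b -> J01 c ->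
  RInt f a b + RInt f b c = RInt f a c.
Proof.
  intros Ha Hb Hc. exact (RInt_Chasles f a b c (ex_RInt_J01 a b Ha Hb) (ex_RInt_J01 b c Hb Hc)).
Qed.

Lemma RInt_close_to_improper (e : posreal) : exists d, 0 < d <= 1/2 /\
  forall a b, 0 < a < d -> 1 - d < b < 1 -> Rabs (RInt f a b - l) < e.
Proof.
  destruct (f_int (ball l e) (locally_ball l e)) as [Q R0 [d1 HQ] [d2 HR] HP].
  exists (Rmin (Rmin d1 d2) (1/2)).
  pose proof (Rmin_l (Rmin d1 d2) (1/2)). pose proof (Rmin_r (Rmin d1 d2) (1/2)).
  pose proof (Rmin_l d1 d2). pose proof (Rmin_r d1 d2).
  split; [split; [repeat apply Rmin_pos; try apply cond_pos; lra | lra]|].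
  intros a b Ha Hb.
  destruct (HP a b) as [y [Hy Hly]].
  - apply HQ; [|lra]. change (Rabs (a - 0) < d1). rewrite Rminus_0_r, Rabs_right; lra.
  - apply HR; [|lra]. change (Rabs (b - 1) < d2). rewrite Rabs_left; lra.
  - simpl in Hy. rewrite (is_RInt_unique _ _ _ _ Hy). exact Hly.
Qed.

Lemma RInt_small_near_0 (e : posreal) : exists d, 0 < d <= 1/2 /\
  forall u v, 0 < u < d -> 0 < v < d -> Rabs (RInt f u v) < e.
Proof.
  destruct (RInt_close_to_improper (pos_div_2 e)) as [d [Hd Hclose]]. simpl in Hclose.
  exists d. split; [exact Hd|]. intros u v Hu Hv.
  assert (E : RInt f u v = RInt f u (1 - d/2) - RInt f v (1 - d/2)).
  { pose proof (RInt_Chasles_J01 v u (1 - d/2)).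
    pose proof (RInt_Chasles_J01 u v (1 - d/2)). unfold J01 in *. lra. }
  rewrite E.
  pose proof (Hclose u (1 - d/2) Hu ltac:(lra)). pose proof (Hclose v (1 - d/2) Hv ltac:(lra)).
  split_Rabs; lra.
Qed.

Lemma RInt_small_near_1 (e : posreal) : exists d, 0 < d <= 1/2 /\
  forall u v, 1 - d < u < 1 -> 1 - d < v < 1 -> Rabs (RInt f u v) < e.
Proof.
  destruct (RInt_close_to_improper (pos_div_2 e)) as [d [Hd Hclose]]. simpl in Hclose.
  exists d. split; [exact Hd|]. intros u v Hu Hv.
  assert (E : RInt f u v = RInt f (d/2) v - RInt f (d/2) u).
  { pose proof (RInt_Chasles_J01 (d/2) u v). unfold J01 in *. lra. }
  rewrite E.
  pose proof (Hclose (d/2) u ltac:(lra) Hu). pose proof (Hclose (d/2) v ltac:(lra) Hv).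
  split_Rabs; lra.
Qed.

Lemma primitive_cvg (F : (R -> Prop) -> Prop) {FF : ProperFilter F} :
  F J01 ->
  (forall e : posreal, exists P, F P /\ forall u v, P u -> P v -> Rabs (RInt f u v) < e) ->
  exists A, filterlim (fun s => RInt f (1/2) s) F (locally A).
Proof.
  intros FJ Hsmall.
  apply (filterlim_locally_cauchy (U := R_CompleteSpace)). intros e.
  destruct (Hsmall e) as [P [FP HP]].
  exists (fun u => J01 u /\ P u). split; [exact (filter_and _ _ FJ FP)|].
  intros u v [Ju Pu] [Jv Pv]. change (Rabs (RInt f (1/2) v - RInt f (1/2) u) < e).
  rewrite <- (RInt_Chasles_J01 (1/2) u v) by (unfold J01 in *; lra).
  replace (RInt f (1/2) u + RInt f u v - RInt f (1/2) u) with (RInt f u v) by lra.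
  exact (HP u v Pu Pv).
Qed.

Lemma primitive_cvg_0 : exists A, filterlim (fun s => RInt f (1/2) s) (at_right 0) (locally A).
Proof.
  apply (primitive_cvg (at_right 0)).
  - exact (at_right_0_interval 1 Rlt_0_1).
  - intros e. destruct (RInt_small_near_0 e) as [d [Hd Hsmall]].
    exists (fun u => 0 < u < d). split; [apply at_right_0_interval; lra | exact Hsmall].
Qed.

Lemma primitive_cvg_1 : exists B, filterlim (fun s => RInt f (1/2) s) (at_left 1) (locally B).
Proof.
  apply (primitive_cvg (at_left 1)).
  - apply (filter_imp (fun u => 1 - 1 < u < 1)); [intros u Hu; unfold J01; lra|].
    exact (at_left_1_interval 1 Rlt_0_1).
  - intros e. destruct (RInt_small_near_1 e) as [d [Hd Hsmall]].
    exists (fun u => 1 - d < u < 1). split; [apply at_left_1_interval; lra | exact Hsmall].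
Qed.

Lemma primitive_derive (s : R) : J01 s -> is_derive (fun s => RInt f (1/2) s) s (f s).
Proof.
  intros Js. apply (is_derive_RInt f _ (1/2)); [|exact (f_cont s Js)].
  apply (filter_imp J01); [|exact (locally_J01 s Js)].
  intros x Jx. apply (RInt_correct (V := R_CompleteNormedModule)), ex_RInt_J01;
    [unfold J01; lra | exact Jx].
Qed.

Lemma improper_primitive_continuous_ext : exists H : R -> R,
  (forall s, continuous H s) /\ forall s, J01 s -> is_derive H s (f s).
Proof.
  destruct primitive_cvg_0 as [A HA]. destruct primitive_cvg_1 as [B HB].
  destruct (C0_extension_lt _ A B 0 1 Rlt_0_1
              (fun s Js => ex_derive_continuous _ s (ex_intro _ _ (primitive_derive s Js)))
              HA HB) as [H [H_cont [H_eq _]]].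
  exists H. split; [exact H_cont|]. intros s Js.
  apply (is_derive_ext_loc (fun s => RInt f (1/2) s)); [|exact (primitive_derive s Js)].
  apply (filter_imp J01); [|exact (locally_J01 s Js)].
  intros x Jx. symmetry. exact (H_eq x Jx).
Qed.

End ImproperPrimitive.

Section StrictIncr.

Variable H : R -> R.
Hypothesis H_incr : strict_incr_I01 H.

Lemma strict_incr_I01_le (s t : R) : 0 <= s -> s <= t -> t <= 1 -> H s <= H t.
Proof.
  intros Hs [Hst| ->] Ht; [left; exact (H_incr s t Hs Hst Ht) | right; reflexivity].
Qed.

Lemma strict_incr_I01_lt_cancel (s t : R) : I01 s -> I01 t -> H s < H t -> s < t.
Proof.
  intros [Hs0 Hs1] [Ht0 Ht1] Hlt. destruct (Rlt_le_dec s t) as [Hst|Hts]; [exact Hst|].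
  pose proof (strict_incr_I01_le t s Ht0 Hts Hs1). lra.
Qed.

Lemma strict_incr_I01_inj (s t : R) : I01 s -> I01 t -> H s = H t -> s = t.
Proof.
  intros Is It Hst. destruct (Rtotal_order s t) as [Hlt|[Heq|Hgt]]; [|exact Heq|].
  - pose proof (H_incr s t (proj1 Is) Hlt (proj2 It)). lra.
  - pose proof (H_incr t s (proj1 It) Hgt (proj2 Is)). lra.
Qed.

Lemma strict_incr_I01_0_1 : H 0 < H 1.
Proof. apply H_incr; lra. Qed.

End StrictIncr.

Section TimeChange.

Variable H : R -> R.
Hypothesis H_cont : forall s, continuous H s.
Hypothesis H_incr : strict_incr_I01 H.

Let H_0_1 : H 0 < H 1 := strict_incr_I01_0_1 H H_incr.

Definition time_change (t : R) : R :=
  epsilon (inhabits 0) (fun s => I01 s /\ H s = H 0 + (H 1 - H 0) * t).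

Lemma time_change_spec (t : R) : I01 t ->
  I01 (time_change t) /\ H (time_change t) = H 0 + (H 1 - H 0) * t.
Proof.
  intros [Ht0 Ht1]. pose proof H_0_1. unfold time_change.
  apply (epsilon_spec (inhabits 0) (fun s => I01 s /\ H s = H 0 + (H 1 - H 0) * t)).
  destruct (IVT_gen H 0 1 (H 0 + (H 1 - H 0) * t)) as [x [Hx Hxy]].
  - intros s. apply continuity_pt_filterlim, H_cont.
  - rewrite Rmin_left, Rmax_right by lra. split; nra.
  - exists x. rewrite Rmin_left, Rmax_right in Hx by lra. split; [exact Hx | exact Hxy].
Qed.

Lemma time_change_I01 (t : R) : I01 t -> I01 (time_change t).
Proof. intros It. exact (proj1 (time_change_spec t It)). Qed.

Lemma time_change_lt (s t : R) : I01 s -> I01 t -> s < t -> time_change s < time_change t.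
Proof.
  intros Is It Hst. destruct (time_change_spec s Is) as [Is' Hs].
  destruct (time_change_spec t It) as [It' Ht].
  apply (strict_incr_I01_lt_cancel H H_incr); [exact Is' | exact It' |].
  rewrite Hs, Ht. pose proof H_0_1. nra.
Qed.

Lemma time_change_onto (y : R) : I01 y -> exists t, I01 t /\ time_change t = y.
Proof.
  intros Iy. pose proof H_0_1.
  pose proof (strict_incr_I01_le H H_incr 0 y ltac:(lra) (proj1 Iy) (proj2 Iy)).
  pose proof (strict_incr_I01_le H H_incr y 1 (proj1 Iy) (proj2 Iy) ltac:(lra)).
  set (t := (H y - H 0) / (H 1 - H 0)).
  assert (It : I01 t).
  { unfold t, I01. split.
    - apply Rdiv_le_0_compat; lra.
    - apply Rmult_le_reg_r with (H 1 - H 0); [lra|]. field_simplify; lra. }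
  exists t. split; [exact It|].
  destruct (time_change_spec t It) as [It' Ht].
  apply (strict_incr_I01_inj H H_incr); [exact It' | exact Iy |].
  rewrite Ht. unfold t. field. lra.
Qed.

Lemma time_change_J01 (t : R) : J01 t -> J01 (time_change t).
Proof.
  intros [Ht0 Ht1].
  assert (I0 : I01 0) by (unfold I01; lra). assert (I1 : I01 1) by (unfold I01; lra).
  assert (It : I01 t) by (unfold I01; lra).
  pose proof (time_change_lt 0 t I0 It Ht0). pose proof (time_change_lt t 1 It I1 Ht1).
  pose proof (time_change_I01 0 I0). pose proof (time_change_I01 1 I1).
  unfold I01, J01 in *. lra.
Qed.


Lemma time_change_lt_near (t y : R) : I01 t -> time_change t < y ->
  within I01 (locally t) (fun u => time_change u < y).
Proof.
  intros It Hty. destruct (time_change_spec t It) as [[Ht0 Ht1] Ht].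
  destruct (Rle_lt_dec y 1) as [Hy1|Hy1].
  2: { unfold within. apply filter_forall. intros u Iu.
       pose proof (time_change_I01 u Iu) as [_ ?]. lra. }
  assert (Iy : I01 y) by (unfold I01; lra).
  pose proof (H_incr _ _ Ht0 Hty Hy1) as HHy. pose proof H_0_1.
  assert (Hd : 0 < (H y - H (time_change t)) / (H 1 - H 0)) by (apply Rdiv_lt_0_compat; lra).
  exists (mkposreal _ Hd). intros u Bu Iu.
  change (Rabs (u - t) < (H y - H (time_change t)) / (H 1 - H 0)) in Bu.
  destruct (time_change_spec u Iu) as [Iu' Hu].
  apply (strict_incr_I01_lt_cancel H H_incr); [exact Iu' | exact Iy |].
  apply Rmult_lt_compat_l with (r := H 1 - H 0) in Bu; [|lra].
  replace ((H 1 - H 0) * ((H y - H (time_change t)) / (H 1 - H 0)))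
    with (H y - H (time_change t)) in Bu by (field; lra).
  pose proof (Rle_abs (u - t)). nra.
Qed.

Lemma time_change_gt_near (t y : R) : I01 t -> y < time_change t ->
  within I01 (locally t) (fun u => y < time_change u).
Proof.
  intros It Hyt. destruct (time_change_spec t It) as [[Ht0 Ht1] Ht].
  destruct (Rle_lt_dec 0 y) as [Hy0|Hy0].
  2: { unfold within. apply filter_forall. intros u Iu.
       pose proof (time_change_I01 u Iu) as [? _]. lra. }
  assert (Iy : I01 y) by (unfold I01; lra).
  pose proof (H_incr _ _ Hy0 Hyt Ht1) as HHy. pose proof H_0_1.
  assert (Hd : 0 < (H (time_change t) - H y) / (H 1 - H 0)) by (apply Rdiv_lt_0_compat; lra).
  exists (mkposreal _ Hd). intros u Bu Iu.
  change (Rabs (u - t) < (H (time_change t) - H y) / (H 1 - H 0)) in Bu.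
  destruct (time_change_spec u Iu) as [Iu' Hu].
  apply (strict_incr_I01_lt_cancel H H_incr); [exact Iy | exact Iu' |].
  apply Rmult_lt_compat_l with (r := H 1 - H 0) in Bu; [|lra].
  replace ((H 1 - H 0) * ((H (time_change t) - H y) / (H 1 - H 0)))
    with (H (time_change t) - H y) in Bu by (field; lra).
  pose proof (Rle_abs (- (u - t))). rewrite Rabs_Ropp in *. nra.
Qed.

Lemma time_change_cont : cont_on_I01 time_change.
Proof.
  intros t It. apply filterlim_locally. intros e. pose proof (cond_pos e).
  apply (filter_imp (fun u =>
    time_change u < time_change t + e /\ time_change t - e < time_change u)).
  - intros u [Hlt Hgt]. change (Rabs (time_change u - time_change t) < e). split_Rabs; lra.
  - apply filter_and; [apply time_change_lt_near | apply time_change_gt_near]; auto; lra.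
Qed.

Variable gamma : R -> R.
Hypothesis gamma_cont : cont_on_I01 gamma.
Hypothesis gamma_pos : forall t, J01 t -> 0 < gamma t.
Hypothesis H_der : forall s, J01 s -> is_derive H s (/ gamma s).

Lemma time_change_increment (s t : R) : I01 s -> I01 t -> s < t ->
  exists c, time_change s < c < time_change t /\
    time_change t - time_change s = (H 1 - H 0) * gamma c * (t - s).
Proof.
  intros Is It Hst.
  destruct (time_change_spec s Is) as [[Hs0 _] Hs].
  destruct (time_change_spec t It) as [[_ Ht1] Ht].
  pose proof (time_change_lt s t Is It Hst).
  destruct (MVT_open H (fun c => / gamma c) (time_change s) (time_change t)) as [c [Hc HMVT]];
    [assumption | intros c Hc; apply H_der; unfold J01; lra | exact H_cont |].
  exists c. split; [exact Hc|].
  assert (0 < gamma c) by (apply gamma_pos; unfold J01; lra).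
  replace (time_change t - time_change s)
    with (gamma c * (/ gamma c * (time_change t - time_change s))) by (field; lra).
  rewrite <- HMVT, Hs, Ht. ring.
Qed.

Lemma time_change_diff_quotient (t u : R) : I01 t -> I01 u -> u <> t ->
  exists c, I01 c /\ Rabs (c - time_change t) <= Rabs (time_change u - time_change t) /\
    (time_change u - time_change t) / (u - t) = (H 1 - H 0) * gamma c.
Proof.
  intros It Iu Hne.
  pose proof (time_change_I01 t It) as [Ht0 Ht1]. pose proof (time_change_I01 u Iu) as [Hu0 Hu1].
  destruct (Rlt_le_dec u t) as [Hut|Htu].
  - destruct (time_change_increment u t Iu It Hut) as [c [Hc Hinc]].
    exists c. split; [unfold I01; lra|]. split; [split_Rabs; lra|].
    replace (time_change u - time_change t) with (- (time_change t - time_change u)) by ring.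
    rewrite Hinc. field. lra.
  - destruct (time_change_increment t u It Iu ltac:(lra)) as [c [Hc Hinc]].
    exists c. split; [unfold I01; lra|]. split; [split_Rabs; lra|].
    rewrite Hinc. field. lra.
Qed.

Lemma time_change_derive :
  is_derive_on_I01 time_change (fun t => (H 1 - H 0) * gamma (time_change t)).
Proof.
  intros t It. pose proof H_0_1. apply filterlim_locally. intros e.
  assert (HeL : 0 < e / (H 1 - H 0)) by (apply Rdiv_lt_0_compat; [apply cond_pos | lra]).
  destruct (proj1 (filterlim_locally _ _) (gamma_cont _ (time_change_I01 t It)) (mkposreal _ HeL))
    as [d Hgamma].
  generalize (proj1 (filterlim_locally _ _) (time_change_cont t It) d). unfold within.
  apply filter_imp. intros u Hu [Iu Hne].
  specialize (Hu Iu). change (Rabs (time_change u - time_change t) < d) in Hu.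
  destruct (time_change_diff_quotient t u It Iu Hne) as [c [Ic [Hc Hq]]].
  assert (Hgc : Rabs (gamma c - gamma (time_change t)) < e / (H 1 - H 0)).
  { apply (Hgamma c); [change (Rabs (c - time_change t) < d); lra | exact Ic]. }
  change (Rabs ((time_change u - time_change t) / (u - t)
                - (H 1 - H 0) * gamma (time_change t)) < e).
  rewrite Hq, <- Rmult_minus_distr_l, Rabs_mult, Rabs_right by lra.
  apply Rmult_lt_compat_l with (r := H 1 - H 0) in Hgc; [|lra].
  replace ((H 1 - H 0) * (e / (H 1 - H 0))) with (pos e) in Hgc by (field; lra).
  exact Hgc.
Qed.

Lemma time_change_C1 :
  C1_closed01 time_change (fun t => (H 1 - H 0) * gamma (time_change t)).
Proof.
  split; [exact time_change_derive|].
  apply (cont_on_I01_continuous_comp (fun y => (H 1 - H 0) * y)).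
  - intros x. apply (ex_derive_continuous (K := R_AbsRing) (V := R_NormedModule)).
    auto_derive. exact I.
  - exact (cont_on_I01_comp _ _ gamma_cont time_change_cont time_change_I01).
Qed.

End TimeChange.

Lemma C1_open01_inv_continuous (gamma : R -> R) : C1_open01 gamma ->
  (forall t, J01 t -> 0 < gamma t) -> forall t, J01 t -> continuous (fun t => / gamma t) t.
Proof.
  intros gamma_C1 gamma_pos t Jt. apply continuous_Rinv_comp.
  - exact (ex_derive_continuous gamma t (proj1 (gamma_C1 t Jt))).
  - exact (Rgt_not_eq _ _ (gamma_pos t Jt)).
Qed.

Theorem lemma4p1 (eps : R) (gamma : R -> R) :
  0 < eps ->
  cont_on_I01 gamma ->
  C1_open01 gamma ->
  gamma 0 = 0 -> gamma 1 = 0 ->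
  (forall t, J01 t -> 0 < gamma t) ->
  (* the improper integral of 1/gamma over (0,1) is finite *)
  ex_RInt_gen (fun t => / gamma t) (at_right 0) (at_left 1) ->
  (* gamma' * gamma has a continuous extension to [0,1] *)
  has_cont_ext_I01 (fun t => Derive gamma t * gamma t) ->
  exists theta dtheta : R -> R,
    C1_closed01 theta dtheta /\
    (forall s t, I01 s -> I01 t -> s < t -> theta s < theta t) /\
    (forall t, I01 t -> I01 (theta t)) /\
    (forall y, I01 y -> exists t, I01 t /\ theta t = y) /\
    has_cont_ext_I01
      (fun t => (Derive gamma (theta t) - eps / gamma (theta t)) * dtheta t).
Proof.
  intros _ gamma_cont gamma_C1 _ _ gamma_pos [l gamma_int] [g [g_cont g_eq]].
  destruct (improper_primitive_continuous_ext _ l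
              (C1_open01_inv_continuous gamma gamma_C1 gamma_pos) gamma_int) as [H [H_cont H_der]].
  pose proof (strict_incr_of_pos_derive H _ H_cont H_der
                (fun t Jt => Rinv_0_lt_compat _ (gamma_pos t Jt))) as H_incr.
  set (L := H 1 - H 0).
  exists (time_change H), (fun t => L * gamma (time_change H t)).
  refine (conj (time_change_C1 H H_cont H_incr gamma gamma_cont gamma_pos H_der)
            (conj (time_change_lt H H_cont H_incr)
               (conj (time_change_I01 H H_cont H_incr)
                  (conj (time_change_onto H H_cont H_incr) _)))).
  exists (fun t => L * g (time_change H t) - L * eps). split.
  - apply (cont_on_I01_continuous_comp (fun y => L * y - L * eps)).
    + intros x. apply (ex_derive_continuous (K := R_AbsRing) (V := R_NormedModule)).
      auto_derive. exact I.
    + exact (cont_on_I01_comp _ _ g_cont (time_change_cont H H_cont H_incr)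
               (time_change_I01 H H_cont H_incr)).
  - intros t Jt. pose proof (time_change_J01 H H_cont H_incr t Jt) as Jtheta.
    rewrite (g_eq _ Jtheta). pose proof (gamma_pos _ Jtheta). field. lra.
Qed.
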